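(* Let $G$ be a finite non-abelian group. If the non-centralizer graph $\Upsilon_G$ is regular, then $G/Z(G)$ is an elementary abelian $2$-group.
   Context: For a finite group $G$, $C_G(x)$ denotes the centralizer of $x\in G$ and $Z(G)$ the center. The non-centralizer graph $\Upsilon_G$ is the simple graph with vertex set $G$ in which two distinct vertices $x,y$ are adjacent if and only if $C_G(x)\neq C_G(y)$. A graph is regular if all its vertices have the same degree. *)

From mathcomp Require Import all_boot all_fingroup all_solvable.
Set Implicit Arguments. Unset Strict Implicit. Unset Printing Implicit Defensive.
Local Open Scope group_scope.

Definition noncent_adj (gT : finGroupType) (G : {set gT}) (x y : gT) : bool :=
  (x != y) && ('C_G[x] != 'C_G[y]).

Definition noncent_deg (gT : finGroupType) (G : {set gT}) (x : gT) : nat :=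
  #|[set y in G | noncent_adj G x y]|.

Definition noncent_regular (gT : finGroupType) (G : {set gT}) : Prop :=
  forall x y, x \in G -> y \in G -> noncent_deg G x = noncent_deg G y.

From mathcomp Require Import all_boot all_fingroup all_solvable.
Set Implicit Arguments. Unset Strict Implicit. Unset Printing Implicit Defensive.
Local Open Scope group_scope.

(* The vertices non-adjacent to x are those sharing its centralizer; for x = 1
   these are exactly the central elements, and for any x they contain the coset
   xZ(G). Regularity makes all these sets as small as Z(G), so each equals xZ(G).
   Since C(x^-1) = C(x), the inverse x^-1 lies in xZ(G), i.e. x^2 is central and
   G/Z(G) has exponent 2. *)

Section Cent1Fiber.

Variables (gT : finGroupType) (G : {group gT}).

Definition cent1_fiber (x : gT) : {set gT} := [set y in G | 'C_G[y] == 'C_G[x]].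

Lemma cent1_fiber_sub x : cent1_fiber x \subset G.
Proof. by apply/subsetP => y; rewrite inE => /andP[]. Qed.

Lemma noncent_degE x : noncent_deg G x = #|G| - #|cent1_fiber x|.
Proof.
rewrite /noncent_deg -(cardsID (cent1_fiber x) G) (setIidPr (cent1_fiber_sub x)).
rewrite addKn; apply: eq_card => y; rewrite !inE /noncent_adj.
case: (y \in G) => //=; rewrite andbT.
by have [->|_] := eqVneq x y; rewrite ?eqxx // eq_sym.
Qed.

Lemma cent1_fiber1 : cent1_fiber 1 = 'Z(G).
Proof.
apply/setP => y; rewrite !inE cent11T setIT; congr (_ && _).
by rewrite -sub_cent1; apply/eqP/setIidPl.
Qed.

Lemma subcent1V x : 'C_G[x^-1] = 'C_G[x].
Proof. by rewrite -!cent_cycle cycleV. Qed.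

Lemma subcent1Mr x z : z \in 'Z(G) -> 'C_G[x * z] = 'C_G[x].
Proof.
case/centerP=> _ cGz; apply/setP => g; rewrite !in_setI; case gG: (g \in G) => //=.
have czg : commute g z by apply: commute_sym; apply: cGz.
apply/cent1P/cent1P => [cgxz | cgx]; last exact: commuteM.
by rewrite -(mulgK z x); apply: commuteM => //; apply: commuteV.
Qed.

Lemma lcoset_center_sub_cent1_fiber x : x \in G -> x *: 'Z(G) \subset cent1_fiber x.
Proof.
move=> xG; apply/subsetP => _ /lcosetP[z zZ ->].
have zG : z \in G := subsetP (center_sub G) z zZ.
by rewrite inE groupM // subcent1Mr ?eqxx.
Qed.

Lemma card_cent1_fiber_regular x :
  noncent_regular G -> x \in G -> #|cent1_fiber x| = #|'Z(G)|.
Proof.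
move=> regG xG; have := regG x 1 xG (group1 G).
rewrite !noncent_degE cent1_fiber1 => /(congr1 (subn #|G|)).
by rewrite !subKn ?subset_leq_card ?cent1_fiber_sub ?center_sub.
Qed.

Lemma cent1_fiber_regular x :
  noncent_regular G -> x \in G -> cent1_fiber x = x *: 'Z(G).
Proof.
move=> regG xG; apply/esym/eqP.
by rewrite eqEcard lcoset_center_sub_cent1_fiber //= card_lcoset card_cent1_fiber_regular.
Qed.

Lemma noncent_regular_sqr_center x :
  noncent_regular G -> x \in G -> x ^+ 2 \in 'Z(G).
Proof.
move=> regG xG.
have : x^-1 \in cent1_fiber x by rewrite inE groupV xG subcent1V eqxx.
by rewrite cent1_fiber_regular // mem_lcoset -invMg groupV.
Qed.

End Cent1Fiber.

Theorem theorem2p6 (gT : finGroupType) (G : {group gT}) :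
  ~~ abelian G -> noncent_regular G -> 2.-abelem (G / 'Z(G)).
Proof.
move=> _ regG; apply: exponent2_abelem; apply/exponentP => _ /morphimP[x Nx xG ->].
by rewrite -morphX //= coset_id // noncent_regular_sqr_center.
Qed.
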